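(* A domain $R$ is a Prüfer $v$-multiplication domain (P$v$MD) if and only if every nonzero finitely generated ideal of $R$ is $w$-basic.
   Context: For a domain $R$ with quotient field $K$ and nonzero fractional ideal $I$: $I^{-1}=(R:I)=\{x\in K:xI\subseteq R\}$, $I_v=(I^{-1})^{-1}$, $I_t=\bigcup J_v$ over finitely generated subideals $J\subseteq I$; $I$ is a $t$-ideal if $I_t=I$; a maximal $t$-ideal is an ideal maximal among proper integral $t$-ideals. The $w$-operation is $I_w=\bigcup (I:J)$ over finitely generated ideals $J$ of $R$ with $J_v=R$ (equivalently $I_w=\bigcap_M IR_M$ over maximal $t$-ideals $M$). $R$ is a P$v$MD if every nonzero finitely generated ideal $I$ is $t$-invertible, i.e. $(II^{-1})_t=R$ (equivalently, $R_M$ is a valuation domain for each maximal $t$-ideal $M$). For a nonzero ideal $I$, an ideal $J\subseteq I$ is a $w$-reduction of $I$ if $(JI^n)_w=(I^{n+1})_w$ for some integer $n\ge0$; $I$ is $w$-basic if every $w$-reduction $J$ of $I$ satisfies $J_w=I_w$. *)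

From HB Require Import structures.
From mathcomp Require Import all_boot all_order all_algebra.
From mathcomp Require Import fraction.
Set Implicit Arguments. Unset Strict Implicit. Unset Printing Implicit Defensive.
Import GRing.Theory.
Local Open Scope ring_scope.

Section Defs.
Variable R : idomainType.
Local Notation K := {fraction R}.
Local Notation emb := (@FracField.tofrac R).

Definition Kset := K -> Prop.

Definition Rset : Kset := fun x => exists r : R, x = emb r.

Definition subset (A B : Kset) := forall x, A x -> B x.
Definition seteq (A B : Kset) := forall x, A x <-> B x.
Definition nonzero (A : Kset) := exists x, A x /\ x != 0.

Definition colon (A B : Kset) : Kset := fun x => forall b, B b -> A (x * b).
Definition inv (A : Kset) : Kset := colon Rset A.
Definition vop (A : Kset) : Kset := inv (inv A).

Definition fg (A : Kset) :=
  exists s : seq K, forall x,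
    A x <-> exists c : nat -> R, x = \sum_(i < size s) emb (c i) * s`_i.

Definition is_ideal (A : Kset) :=
  [/\ subset A Rset, A 0,
      forall x y, A x -> A y -> A (x + y)
    & forall r x, A x -> A (emb r * x)].

Definition prod (A B : Kset) : Kset := fun x =>
  exists s : seq (K * K), (forall p, p \in s -> A p.1 /\ B p.2) /\
    x = \sum_(p <- s) p.1 * p.2.

Fixpoint pw (A : Kset) (n : nat) : Kset :=
  match n with 0 => Rset | n'.+1 => prod (pw A n') A end.

Definition top (A : Kset) : Kset := fun x =>
  exists J, fg J /\ subset J A /\ vop J x.

Definition wop (A : Kset) : Kset := fun x =>
  exists J, is_ideal J /\ fg J /\ seteq (vop J) Rset /\ colon A J x.

Definition t_invertible (A : Kset) := seteq (top (prod A (inv A))) Rset.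

Definition PvMD := forall I, is_ideal I -> fg I -> nonzero I -> t_invertible I.

Definition w_reduction (J I : Kset) :=
  is_ideal J /\ subset J I /\
  exists n : nat, seteq (wop (prod J (pw I n))) (wop (pw I n.+1)).

Definition w_basic (I : Kset) :=
  forall J, w_reduction J I -> seteq (wop J) (wop I).
End Defs.

(* A GV-ideal is a finitely generated ideal J of R with J^-1 = R. The w-closure
   of A consists of the x with x L ⊆ A for some GV-ideal L, and a nonzero
   finitely generated ideal I is t-invertible iff I I^-1 contains a GV-ideal.

   In a PvMD, a GV-ideal inside I I^-1 cancels one factor I under w, so a
   descent on n turns (J I^n)_w = (I^(n+1))_w into J_w = I_w.

   Conversely, let finitely generated ideals be w-basic. If y^2 ∈ b (b, y) then
   (b) is a w-reduction of (b, y), hence y ∈ (b)_w and y/b ∈ R. For nonzero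
   a, b, the ideal (a^2, b^2) is a w-reduction of (a^2, ab, b^2), so some
   GV-ideal L satisfies ab l = r a^2 + s b^2, i.e. l = a (r/b) + b (s/a), for
   l ∈ L; since (ra)^2 ∈ b (b, ra) and (sb)^2 ∈ a (a, sb), both r/b and s/a lie
   in (a, b)^-1, so L ⊆ (a, b)(a, b)^-1. Multiplying GV-ideals obtained for the
   pairs (z, x), z ∈ s, with one inside (s)(s)^-1 gives one inside
   (x, s)(x, s)^-1: induction on the number of generators. *)

From Pilot Require Import Defs.
From mathcomp Require Import all_boot all_order all_algebra.
From mathcomp Require Import fraction ring.
Set Implicit Arguments. Unset Strict Implicit. Unset Printing Implicit Defensive.
Import GRing.Theory.
Local Open Scope ring_scope.

Lemma div_sum_of_mul (F : fieldType) (a b l x y : F) : a != 0 -> b != 0 ->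
  a * b * l = x * (a * a) + y * (b * b) -> l = a * (x / b) + b * (y / a).
Proof.
move=> a0 b0 E; apply: (mulfI (mulf_neq0 a0 b0)); rewrite E.
by field; rewrite a0 b0.
Qed.

Section PvMD.
Variable R : idomainType.
Local Notation K := {fraction R}.
Local Notation emb := (@FracField.tofrac R).
Local Notation Rs := (@Rset R).
Local Notation sub := (@Defs.subset R).
Local Notation inv := (@Defs.inv R).

Definition submod (A : Kset R) :=
  [/\ A 0, forall x y, A x -> A y -> A (x + y) & forall r x, A x -> A (emb r * x)].

Lemma ideal_submod A : is_ideal A -> submod A.
Proof. by case. Qed.

Lemma submod_ext (A B : Kset R) : seteq A B -> submod A -> submod B.
Proof.
move=> E [A0 AD AM]; split; first by apply/E.
  by move=> x y /E Hx /E Hy; apply/E; apply: AD.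
by move=> r x /E Hx; apply/E; apply: AM.
Qed.

Lemma submod_mulr (A : Kset R) c : submod A -> submod (fun y => A (y * c)).
Proof.
move=> [A0 AD AM]; split; first by rewrite mul0r.
  by move=> x y Hx Hy; rewrite mulrDl; apply: AD.
by move=> r x Hx; rewrite -mulrA; apply: AM.
Qed.

Lemma submod_mull (A : Kset R) c : submod A -> submod (fun y => A (c * y)).
Proof. by move=> /(submod_mulr c); apply: submod_ext => y; rewrite mulrC. Qed.

Lemma submod_sum (A : Kset R) (I : eqType) (s : seq I) (F : I -> K) :
  submod A -> (forall i, i \in s -> A (F i)) -> A (\sum_(i <- s) F i).
Proof.
move=> [A0 AD _]; elim: s => [|i s IH] H; first by rewrite big_nil.
rewrite big_cons; apply: AD; first by apply: H; rewrite mem_head.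
by apply: IH => j Hj; apply: H; rewrite in_cons Hj orbT.
Qed.

Lemma Rset_emb r : Rs (emb r). Proof. by exists r. Qed.
Lemma Rset0 : Rs 0. Proof. by exists 0; rewrite tofrac0. Qed.
Lemma Rset1 : Rs 1. Proof. by exists 1; rewrite tofrac1. Qed.
Lemma RsetD x y : Rs x -> Rs y -> Rs (x + y).
Proof. by move=> [a ->] [b ->]; exists (a + b); rewrite tofracD. Qed.
Lemma RsetM x y : Rs x -> Rs y -> Rs (x * y).
Proof. by move=> [a ->] [b ->]; exists (a * b); rewrite tofracM. Qed.

Lemma RsetN x : Rs x -> Rs (- x).
Proof. by move=> [a ->]; exists (- a); rewrite tofracN. Qed.

Lemma Rset_submod : submod Rs.
Proof. by split; [exact: Rset0 | exact: RsetD | move=> r x; apply/RsetM/Rset_emb]. Qed.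

Lemma submodMr (A : Kset R) x y : submod A -> A x -> Rs y -> A (x * y).
Proof. by move=> [_ _ AM] Hx [r ->]; rewrite mulrC; apply: AM. Qed.

Definition gen (s : seq K) : Kset R := fun x =>
  exists c : nat -> R, x = \sum_(i < size s) emb (c i) * s`_i.

Lemma gen_submod s : submod (gen s).
Proof.
split.
- by exists (fun _ => 0); rewrite big1 // => i _; rewrite tofrac0 mul0r.
- move=> x y [c ->] [d ->]; exists (fun i => c i + d i).
  by rewrite -big_split /=; apply: eq_bigr => i _; rewrite tofracD mulrDl.
- move=> r x [c ->]; exists (fun i => r * c i); rewrite mulr_sumr.
  by apply: eq_bigr => i _; rewrite tofracM mulrA.
Qed.

Lemma gen_mem s z : z \in s -> gen s z.
Proof.
move=> Hz; exists (fun i => if i == index z s then 1 else 0).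
have Hi : (index z s < size s)%N by rewrite index_mem.
rewrite (bigD1 (Ordinal Hi)) //= eqxx tofrac1 mul1r nth_index //.
rewrite big1 ?addr0 // => i Hne; case: ifP => [/eqP Ei|_]; last by rewrite tofrac0 mul0r.
by case/eqP: Hne; apply: val_inj.
Qed.

Lemma gen_min s A : submod A -> (forall z, z \in s -> A z) -> sub (gen s) A.
Proof.
move=> HA H x [c ->]; apply: submod_sum => // i _.
by case: HA => _ _; apply; apply/H/mem_nth.
Qed.

Lemma gen_subset s t : {subset s <= t} -> sub (gen s) (gen t).
Proof. by move=> st; apply: gen_min => [|z /st]; [exact: gen_submod | exact: gen_mem]. Qed.

Lemma gen_ideal s : (forall z, z \in s -> Rs z) -> is_ideal (gen s).
Proof. by move=> H; case: (gen_submod s) => *; split => //; apply: gen_min => //; exact: Rset_submod. Qed.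

Lemma gen_fg s : fg (gen s). Proof. by exists s. Qed.

Lemma fg_ideal (J : Kset R) : fg J -> sub J Rs -> is_ideal J.
Proof.
move=> [s E] JR; have [J0 JD JM] : submod J.
  by apply: submod_ext (gen_submod s) => x; split => /E.
by split.
Qed.

Lemma gen1P b x : gen [:: b] x -> exists r, x = emb r * b.
Proof. by move=> [c ->]; exists (c 0%N); rewrite big_ord1. Qed.

Lemma gen2P a b x : gen [:: a; b] x -> exists r s, x = emb r * a + emb s * b.
Proof. by move=> [c ->]; exists (c 0%N), (c 1%N); rewrite !big_ord_recl big_ord0 addr0. Qed.

Lemma gen_nonzero s : nonzero (gen s) -> has (fun z => z != 0) s.
Proof.
move=> [x [Hx /negP x0]]; apply/negPn/negP => /hasPn s0; apply/x0/eqP.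
apply: (gen_min (A := fun y => y = 0)) Hx => [|z /s0]; last by rewrite negbK => /eqP.
by split=> [//| y z -> -> | r y ->]; rewrite ?addr0 ?mulr0.
Qed.

Lemma gen1_Rset x : gen [:: 1] x <-> Rs x.
Proof.
split; first by apply: gen_min; [exact: Rset_submod | move=> z; rewrite inE => /eqP ->; exact: Rset1].
move=> [r ->]; rewrite -[emb r]mulr1; case: (gen_submod [:: 1]) => _ _; apply.
exact/gen_mem/mem_head.
Qed.

Lemma prod_sub (A B C : Kset R) :
  submod C -> (forall a b, A a -> B b -> C (a * b)) -> sub (prod A B) C.
Proof.
move=> [C0 CD _] H x [s [Hs ->]]; elim: s Hs => [|p s IH] Hs; first by rewrite big_nil.
rewrite big_cons; apply: CD; last by apply: IH => q Hq; apply: Hs; rewrite in_cons Hq orbT.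
by case: (Hs p (mem_head _ _)); apply: H.
Qed.

Lemma prod_mem (A B : Kset R) a b : A a -> B b -> prod A B (a * b).
Proof.
move=> Ha Hb; exists [:: (a, b)]; split; last by rewrite big_seq1.
by move=> p; rewrite inE => /eqP ->.
Qed.

Lemma prod0 (A B : Kset R) : prod A B 0.
Proof. by exists [::]; rewrite big_nil. Qed.

Lemma prodD (A B : Kset R) x y : prod A B x -> prod A B y -> prod A B (x + y).
Proof.
move=> [s [Hs ->]] [t [Ht ->]]; exists (s ++ t); rewrite big_cat; split => //.
by move=> p; rewrite mem_cat => /orP [] ?; [apply: Hs | apply: Ht].
Qed.

Lemma prod_submodr (A B : Kset R) : submod B -> submod (prod A B).
Proof.
move=> [_ _ BM]; split; [exact: prod0 | exact: prodD |].
move=> r x [s [Hs ->]]; exists [seq (p.1, emb r * p.2) | p <- s]; split.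
  by move=> p /mapP [q /Hs [? ?] ->]; split => //; apply: BM.
by rewrite big_map mulr_sumr; apply: eq_bigr => p _; rewrite mulrCA.
Qed.

Lemma prod_submodl (A B : Kset R) : submod A -> submod (prod A B).
Proof.
move=> [_ _ AM]; split; [exact: prod0 | exact: prodD |].
move=> r x [s [Hs ->]]; exists [seq (emb r * p.1, p.2) | p <- s]; split.
  by move=> p /mapP [q /Hs [? ?] ->]; split => //; apply: AM.
by rewrite big_map mulr_sumr; apply: eq_bigr => p _; rewrite mulrA.
Qed.

Lemma prod_mono (A B A' B' : Kset R) :
  sub A A' -> sub B B' -> sub (prod A B) (prod A' B').
Proof.
move=> HA HB x [s [Hs ->]]; exists s; split => // p /Hs [? ?].
by split; [apply: HA | apply: HB].
Qed.

Lemma prod_Rsetl (A : Kset R) : submod A -> seteq (prod Rs A) A.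
Proof.
move=> HA x; split; last by move=> Hx; rewrite -[x]mul1r; apply: prod_mem => //; exact: Rset1.
by apply: prod_sub => // a b Ha Hb; rewrite mulrC; apply: submodMr.
Qed.

Lemma prod_gen_sub (C : Kset R) s t : submod C ->
  (forall z1 z2, z1 \in s -> z2 \in t -> C (z1 * z2)) -> sub (prod (gen s) (gen t)) C.
Proof.
move=> HC H; apply: prod_sub => // a b Ha Hb.
apply: (gen_min (A := fun a => C (a * b))) Ha => [|z1 Hz1]; first exact: submod_mulr.
by apply: (gen_min (A := fun b => C (z1 * b))) Hb => [|z2 Hz2]; [exact: submod_mull | exact: H].
Qed.

Lemma prod_gen_mem s t u v : u \in s -> v \in t -> prod (gen s) (gen t) (u * v).
Proof. by move=> Hu Hv; apply: prod_mem; apply: gen_mem. Qed.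

(** * Inverses and GV-ideals *)

Lemma inv_gen s y : inv (gen s) y <-> (forall z, z \in s -> Rs (y * z)).
Proof.
split=> [H z Hz | H]; first exact/H/gen_mem.
apply: gen_min => [|z Hz]; last exact: H.
by apply: submod_mull; exact: Rset_submod.
Qed.

Lemma inv_anti (A B : Kset R) : sub A B -> sub (inv B) (inv A).
Proof. by move=> H y Hy b Hb; apply/Hy/H. Qed.

Lemma inv_Rset y : inv Rs y <-> Rs y.
Proof.
split=> [H | Hy b]; last exact: RsetM.
by rewrite -[y]mulr1; apply/H/Rset1.
Qed.

Lemma sub_vop (A : Kset R) : sub A (vop A).
Proof. by move=> a Ha b Hb; rewrite mulrC; apply: Hb. Qed.

Lemma prod_inv_Rset (A : Kset R) : sub (prod A (inv A)) Rs.
Proof. by apply: prod_sub => [|a b Ha Hb]; [exact: Rset_submod | rewrite mulrC; apply: Hb]. Qed.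

(* [R ⊆ J^-1] holds for every integral ideal, so only the other inclusion is required. *)
Definition GV (J : Kset R) := [/\ is_ideal J, fg J & sub (inv J) Rs].

Definition contains_GV (A : Kset R) := exists L, GV L /\ sub L A.

Lemma GV_vop J : GV J -> seteq (vop J) Rs.
Proof.
move=> [[JR _ _ _] _ JV] y; split=> [Hy | Hy b Hb]; last by apply: RsetM => //; apply: JV.
by apply/inv_Rset => b Hb; apply: Hy => c /JR; apply: RsetM.
Qed.

Lemma GV_gen1 : GV (gen [:: 1]).
Proof.
split; [| exact: gen_fg |].
  by apply: gen_ideal => z; rewrite inE => /eqP ->; exact: Rset1.
by move=> y /inv_gen H; rewrite -[y]mulr1; apply/H/mem_head.
Qed.

Lemma contains_GV_mono (A B : Kset R) : sub A B -> contains_GV A -> contains_GV B.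
Proof. by move=> AB [L [HL LA]]; exists L; split => // x /LA /AB. Qed.

Lemma GV_prod L1 L2 : GV L1 -> GV L2 -> contains_GV (prod L1 L2).
Proof.
move=> [I1 [s1 E1] V1] [I2 [s2 E2] V2].
have gen1 : seteq L1 (gen s1) by move=> x; exact: E1.
have gen2 : seteq L2 (gen s2) by move=> x; exact: E2.
exists (gen [seq a * b | a <- s1, b <- s2]); split; last first.
  apply: gen_min => [|z /allpairsP [[a b] [Ha Hb ->]]].
    by apply/prod_submodr/ideal_submod.
  by apply: prod_mem; [apply/gen1 | apply/gen2]; apply: gen_mem.
split; [| exact: gen_fg |].
- apply: gen_ideal => z /allpairsP [[a b] [Ha Hb ->]] /=.
  case: I1 => S1 _ _ _; case: I2 => S2 _ _ _.
  by apply: RsetM; [apply: S1; apply/gen1 | apply: S2; apply/gen2]; apply: gen_mem.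
- move=> y /inv_gen Hy; apply: V1 => a /gen1 Ha; move: a Ha; apply/inv_gen => a Ha.
  apply: V2 => b /gen2 Hb; move: b Hb; apply/inv_gen => b Hb; rewrite -mulrA.
  by apply/Hy/allpairs_f.
Qed.

Lemma contains_GV_prod (A B : Kset R) :
  contains_GV A -> contains_GV B -> contains_GV (prod A B).
Proof.
move=> [L1 [HL1 L1A]] [L2 [HL2 L2B]].
by apply: contains_GV_mono (GV_prod HL1 HL2); apply: prod_mono.
Qed.

Lemma contains_GV_and (A B : Kset R) :
  contains_GV A -> contains_GV B -> contains_GV (fun x => A x /\ B x).
Proof.
move=> [L1 [HL1 L1A]] [L2 [HL2 L2B]].
apply: contains_GV_mono (GV_prod HL1 HL2) => x Hx.
have [I1 _ _] := HL1; have [I2 _ _] := HL2.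
have [M1 M2] := (ideal_submod I1, ideal_submod I2).
case: I1 I2 => [R1 _ _ _] [R2 _ _ _]; split.
- by apply/L1A; apply: (prod_sub M1) Hx => a b Ha /R2; apply: submodMr.
- by apply/L2B; apply: (prod_sub M2) Hx => a b /R1 Ha Hb; rewrite mulrC; apply: submodMr.
Qed.

Lemma contains_GV_all (I : eqType) (s : seq I) (P : I -> Kset R) :
  (forall i, i \in s -> contains_GV (P i)) ->
  contains_GV (fun x => forall i, i \in s -> P i x).
Proof.
elim: s => [|i s IH] H.
  by exists (gen [:: 1]); split => //; exact: GV_gen1.
have HP := H i (mem_head _ _).
have /IH Hs : forall j, j \in s -> contains_GV (P j) by move=> j Hj; apply/H; rewrite in_cons Hj orbT.
apply: contains_GV_mono (contains_GV_and HP Hs) => x [Hi Hs'] j.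
by rewrite in_cons => /orP [/eqP -> | /Hs'].
Qed.

(** * The w-operation *)

Lemma wopP (A : Kset R) x : wop A x <-> contains_GV (fun b => A (x * b)).
Proof.
split=> [[J [HJ [Jfg [E Hx]]]] | [L [HL Hx]]]; last first.
  by have [? ? _] := HL; exists L; split; [| split; [| split; [exact: GV_vop |]]].
exists J; split => //; split => // y /sub_vop Hy; apply/inv_Rset.
by apply: inv_anti Hy => b /E.
Qed.

Lemma wop_mono (A B : Kset R) : sub A B -> sub (wop A) (wop B).
Proof. by move=> AB x /wopP HA; apply/wopP; apply: contains_GV_mono HA => b /AB. Qed.

Lemma wop_ext (A B : Kset R) : seteq A B -> seteq (wop A) (wop B).
Proof. by move=> E x; split; apply: wop_mono => y /E. Qed.

Lemma sub_wop (A : Kset R) : submod A -> sub A (wop A).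
Proof.
move=> HA x Hx; apply/wopP; exists (gen [:: 1]); split; first exact: GV_gen1.
by move=> b /gen1_Rset; apply: submodMr.
Qed.

Lemma wop_submod (A : Kset R) : submod A -> submod (wop A).
Proof.
move=> HA; have [A0 AD AM] := HA; split.
- by apply: sub_wop.
- move=> x y /wopP Hx /wopP Hy; apply/wopP.
  by apply: contains_GV_mono (contains_GV_and Hx Hy) => b [? ?]; rewrite mulrDl; apply: AD.
- move=> r x /wopP Hx; apply/wopP.
  by apply: contains_GV_mono Hx => b ?; rewrite -mulrA; apply: AM.
Qed.

Lemma wop_idem (A : Kset R) : submod A -> sub (wop (wop A)) (wop A).
Proof.
move=> HA x /wopP [L [HL Lx]]; have [_ [s E] _] := HL; apply/wopP.
have Hs : contains_GV (fun m => forall z, z \in s -> A (x * z * m)).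
  apply: (contains_GV_all (P := fun z m => A (x * z * m))) => z Hz.
  by apply/wopP; apply: Lx; apply/E; apply: gen_mem.
have HL' : contains_GV L by exists L; split.
apply: contains_GV_mono (contains_GV_prod HL' Hs).
apply: prod_sub => [|l m /E Hl Hm]; first exact: submod_mull.
rewrite mulrA mulrAC; move: l Hl.
apply: (gen_min (A := fun l => A (x * m * l))) => [|z Hz]; first exact: submod_mull.
by rewrite mulrAC; apply: Hm.
Qed.

Lemma t_invertibleP (I : Kset R) : t_invertible I <-> contains_GV (prod I (inv I)).
Proof.
split=> [tI | [L [HL LI]] x].
  have [J [Jfg [JI Jv]]] : top (prod I (inv I)) 1 by apply/tI; exact: Rset1.
  have JR : sub J Rs by move=> y /JI /prod_inv_Rset.
  exists J; split => //; split => [|//|y Hy]; first exact: fg_ideal.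
  by rewrite -[y]mul1r; apply: Jv.
split=> [[J [_ [JI Jv]]] | Hx].
  have JR : sub J Rs by move=> y /JI /prod_inv_Rset.
  by rewrite -[x]mulr1; apply: (inv_anti (inv_anti JR) Jv); apply/inv_Rset; exact: Rset1.
have [? ? _] := HL; exists L; split => //; split => //.
exact/(GV_vop HL).
Qed.

(** * PvMDs have w-basic finitely generated ideals *)

Lemma pw_submod (I : Kset R) n : submod I -> submod (pw I n).
Proof. by case: n => [|n] HI /=; [exact: Rset_submod | exact: prod_submodr]. Qed.

Lemma prod_cancel_inv (A B I : Kset R) y q : submod B ->
  prod A (prod B I) y -> inv I q -> prod A B (y * q).
Proof.
move=> HB + Hq; move: y; apply: (prod_sub (C := fun y => prod A B (y * q))) => [|a c Ha Hc].
  exact/submod_mulr/prod_submodr.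
rewrite -mulrA; apply: prod_mem => //; move: c Hc.
apply: (prod_sub (C := fun c => B (c * q))) => [|b i Hb Hi]; first exact: submod_mulr.
by rewrite -mulrA; apply: submodMr => //; rewrite mulrC; apply: Hq.
Qed.

Lemma wop_cancel (I A B C : Kset R) : contains_GV (prod I (inv I)) -> submod B ->
  (forall y q, C y -> inv I q -> B (y * q)) ->
  (forall a i, A a -> I i -> wop C (a * i)) -> sub (wop A) (wop B).
Proof.
move=> HI HB CB AC x /wopP HA; apply: wop_idem => //; apply/wopP.
apply: contains_GV_mono (contains_GV_prod HA HI).
apply: prod_sub => [|a j Ha Hj]; first exact/submod_mull/wop_submod.
rewrite mulrA; move: j Hj.
apply: (prod_sub (C := fun j => wop B (x * a * j))) => [|i q Hi Hq].
  exact/submod_mull/wop_submod.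
have /wopP HC := AC _ _ Ha Hi; rewrite mulrA; apply/wopP.
by apply: contains_GV_mono HC => b Hb; rewrite mulrAC; apply: CB.
Qed.

Lemma wop_pw_cancel (I J : Kset R) : contains_GV (prod I (inv I)) -> submod I -> submod J ->
  forall n, sub (wop (pw I n.+1)) (wop (prod J (pw I n))) -> sub (wop I) (wop J).
Proof.
move=> W HI HJ; elim=> [|k IH] H.
  move=> x Hx; apply: (wop_mono (A := prod J Rs)).
    by apply: prod_sub => // a b; apply: submodMr.
  by apply: H; apply: wop_mono Hx => y /(prod_Rsetl HI).
apply: IH; apply: (wop_cancel (C := prod J (pw I k.+1)) W) => [| y q | a i Ha Hi].
- exact/prod_submodr/pw_submod.
- exact: prod_cancel_inv (pw_submod k HI).
- by apply: H; apply: sub_wop; [exact: pw_submod | exact: prod_mem].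
Qed.

Lemma PvMD_w_basic : PvMD R ->
  forall I : Kset R, is_ideal I -> fg I -> nonzero I -> w_basic I.
Proof.
move=> HP I HI Ifg Inz J [HJ [JI [n E]]] x; split; first exact: wop_mono.
have /t_invertibleP W := HP I HI Ifg Inz.
by apply: (wop_pw_cancel W (ideal_submod HI) (ideal_submod HJ) (n := n)) => y /E.
Qed.

(** * Domains with w-basic finitely generated ideals are PvMDs *)

Lemma w_reduction_sq (J I : Kset R) : is_ideal J -> submod I -> sub J I ->
  sub (prod I I) (prod J I) -> w_reduction J I.
Proof.
move=> HJ HI JI IIJ; split=> //; split=> //; exists 1%N; apply: wop_ext => x /=.
have toI : sub (prod Rs I) I by move=> y /(prod_Rsetl HI).
have ofI : sub I (prod Rs I) by move=> y /(prod_Rsetl HI).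
by split=> [/(prod_mono JI toI) | /(prod_mono toI (fun _ => id)) /IIJ]; apply: prod_mono.
Qed.

Lemma wop_gen1_div b y : wop (gen [:: b]) y -> Rs (y / b).
Proof.
move=> /wopP [L [[_ _ LV] Ly]]; apply: LV => l /Ly /gen1P [r Er].
have [-> | b0] := eqVneq b 0; first by rewrite invr0 !mulr0 mul0r; exact: Rset0.
by rewrite mulrAC Er mulfK //; exact: Rset_emb.
Qed.

Lemma Rset_sub_prod_inv s x : x \in s -> x != 0 -> (forall w, w \in s -> Rs (w / x)) ->
  sub Rs (prod (gen s) (inv (gen s))).
Proof.
move=> xs x0 sx m Rm; rewrite -[m](divfK x0) mulrC; apply: prod_mem.
  exact: gen_mem.
by apply/inv_gen => w /sx Rw; rewrite mulrAC -mulrA; apply: RsetM.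
Qed.

Section WBasic.
Hypothesis w_basic_fg : forall I : Kset R, is_ideal I -> fg I -> nonzero I -> w_basic I.

Lemma gen_sub_wop_of_sq t s : (forall z, z \in s -> Rs z) -> nonzero (gen s) ->
  {subset t <= s} -> (forall z1 z2, z1 \in s -> z2 \in s -> prod (gen t) (gen s) (z1 * z2)) ->
  sub (gen s) (wop (gen t)).
Proof.
move=> sR s_nz ts sq x Hx.
have tR z : z \in t -> Rs z by move/ts/sR.
have red : w_reduction (gen t) (gen s).
  apply: w_reduction_sq; [exact: gen_ideal | exact: gen_submod | exact: gen_subset |].
  exact: prod_gen_sub (prod_submodr _ (gen_submod s)) sq.
by apply/(w_basic_fg (gen_ideal sR) (gen_fg s) s_nz red); apply: sub_wop => //; exact: gen_submod.
Qed.

Lemma Rset_div_of_sq b y w : Rs b -> b != 0 -> Rs y -> gen [:: b; y] w ->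
  y * y = b * w -> Rs (y / b).
Proof.
move=> Rb b0 Ry Hw Eyy; apply: wop_gen1_div.
apply: (@gen_sub_wop_of_sq [:: b] [:: b; y]); last by apply: gen_mem; rewrite !inE eqxx orbT.
- by move=> z; rewrite !inE => /orP [] /eqP ->.
- by exists b; split => //; exact/gen_mem/mem_head.
- by move=> z; rewrite !inE => ->.
- move=> z1 z2; rewrite !inE => /orP [] /eqP -> /orP [] /eqP ->.
  + by apply: prod_gen_mem; rewrite !inE eqxx.
  + by apply: prod_gen_mem; rewrite !inE eqxx ?orbT.
  + by rewrite mulrC; apply: prod_gen_mem; rewrite !inE eqxx ?orbT.
  + by rewrite Eyy; apply: prod_mem; [exact/gen_mem/mem_head |].
Qed.

Lemma Rset_div_of_sum_sq a b l r s : Rs a -> Rs b -> b != 0 -> Rs l -> Rs r -> Rs s ->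
  a * b * l = r * (a * a) + s * (b * b) -> Rs (r * a / b).
Proof.
move=> Ra Rb b0 Rl Rr Rs_ E.
apply: (@Rset_div_of_sq b (r * a) (b * - (r * s) + r * a * l)) => //.
- exact: RsetM.
- have Gs := gen_submod [:: b; r * a]; case: (Gs) => _ GD _.
  apply: GD; apply: submodMr => //; try by apply: gen_mem; rewrite !inE eqxx ?orbT.
  exact/RsetN/RsetM.
- have -> : r * a * (r * a) = r * (r * (a * a) + s * (b * b)) - r * s * (b * b) by ring.
  by rewrite -E; ring.
Qed.

Lemma gen2_t_invertible a b : Rs a -> Rs b -> a != 0 ->
  contains_GV (prod (gen [:: a; b]) (inv (gen [:: a; b]))).
Proof.
move=> Ra Rb a0; have [-> | b0] := eqVneq b 0.
  exists (gen [:: 1]); split=> [|m /gen1_Rset]; first exact: GV_gen1.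
  apply: (Rset_sub_prod_inv (mem_head a [:: 0]) a0) => w.
  by rewrite !inE => /orP [] /eqP ->; [rewrite divff //; exact: Rset1 | rewrite mul0r; exact: Rset0].
set t := [:: a * a; b * b]; set s := [:: a * a; a * b; b * b].
have : wop (gen t) (a * b).
  apply: (@gen_sub_wop_of_sq t s); last by apply: gen_mem; rewrite !inE eqxx orbT.
  - by move=> z; rewrite !inE => /or3P [] /eqP ->; apply: RsetM.
  - by exists (a * a); split; [apply: gen_mem; exact: mem_head | exact: mulf_neq0].
  - by move=> z; rewrite !inE => /orP [] ->; rewrite ?orbT.
  move=> z1 z2; rewrite !inE => /or3P [] /eqP -> /or3P [] /eqP ->;
    rewrite ?[a * b * (a * b)]mulrACA ?[a * b * _]mulrC;
    by apply: prod_gen_mem; rewrite !inE eqxx ?orbT.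
move=> /wopP [L [HL Lab]]; exists L; split => // l Hl.
have [[LR _ _ _] _ _] := HL.
have [r [s' Ers]] := gen2P (Lab l Hl).
have Rl := LR l Hl.
have ra : Rs (emb r * a / b) by apply: (@Rset_div_of_sum_sq a b l _ (emb s')) => //; exact: Rset_emb.
have sb : Rs (emb s' * b / a).
  apply: (@Rset_div_of_sum_sq b a l _ (emb r)) => //; try exact: Rset_emb.
  by rewrite addrC (mulrC b a).
rewrite (div_sum_of_mul a0 b0 Ers); apply: prodD; apply: prod_mem;
  try by apply: gen_mem; rewrite !inE eqxx ?orbT.
- apply/inv_gen => w; rewrite !inE => /orP [] /eqP ->; first by rewrite mulrAC.
  by rewrite divfK //; exact: Rset_emb.
- apply/inv_gen => w; rewrite !inE => /orP [] /eqP ->; last by rewrite mulrAC.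
  by rewrite divfK //; exact: Rset_emb.
Qed.

(* [z q ∈ R] carries [(z, x)^-1] into [(x :: s)^-1]. *)
Lemma prod_inv_cons x s z q b : z \in s -> inv (gen s) q ->
  prod (gen [:: z; x]) (inv (gen [:: z; x])) b ->
  prod (gen (x :: s)) (inv (gen (x :: s))) (z * q * b).
Proof.
move=> zs Hq; have qz : Rs (q * z) by move/inv_gen: Hq; apply.
apply: (prod_sub (C := fun b => prod _ _ (z * q * b))) => [|c d Hc Hd].
  exact/submod_mull/prod_submodl/gen_submod.
rewrite mulrCA; apply: prod_mem.
  by apply: gen_subset Hc => w; rewrite !inE => /orP [] /eqP ->; rewrite ?zs ?eqxx ?orbT.
move/inv_gen: Hd => Hd; apply/inv_gen => w; rewrite inE => /orP [/eqP -> | ws].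
  have -> : z * q * d * x = q * z * (d * x) by ring.
  by apply: RsetM qz _; apply: Hd; rewrite !inE eqxx orbT.
have -> : z * q * d * w = q * w * (d * z) by ring.
by apply: RsetM; [move/inv_gen: Hq; apply | apply: Hd; rewrite inE eqxx].
Qed.

Lemma gen_t_invertible s : (forall z, z \in s -> Rs z) -> has (fun z => z != 0) s ->
  contains_GV (prod (gen s) (inv (gen s))).
Proof.
elim: s => [|x s IH] //= sR nz.
have Rx := sR x (mem_head x s).
have sR' z : z \in s -> Rs z by move=> zs; apply: sR; rewrite inE zs orbT.
have [s_nz | /hasPn s_0] := boolP (has (fun z => z != 0) s); last first.
  have x0 : x != 0 by case/orP: nz => // /hasP [z /s_0 /negP].
  exists (gen [:: 1]); split=> [|m /gen1_Rset]; first exact: GV_gen1.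
  apply: (Rset_sub_prod_inv (mem_head x s) x0) => w; rewrite inE => /orP [/eqP -> | /s_0].
    by rewrite divff //; exact: Rset1.
  by rewrite negbK => /eqP ->; rewrite mul0r; exact: Rset0.
have pairs : contains_GV (fun m => forall z, z \in s -> z != 0 ->
    prod (gen [:: z; x]) (inv (gen [:: z; x])) m).
  apply: (contains_GV_all (P := fun z m => z != 0 -> prod _ _ m)) => z zs.
  have [-> | z0] := eqVneq z 0; first by exists (gen [:: 1]); split => //; exact: GV_gen1.
  by apply: contains_GV_mono (gen2_t_invertible (sR' z zs) Rx z0) => m Hm _.
apply: contains_GV_mono (contains_GV_prod (IH sR' s_nz) pairs).
have HT := prod_submodl (inv (gen (x :: s))) (gen_submod (x :: s)).
apply: prod_sub => // a m Ha Hm; move: a Ha.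
apply: (prod_sub (C := fun a => prod _ _ (a * m))) => [|g q Hg Hq]; first exact: submod_mulr.
move: g Hg; apply: (gen_min (A := fun g => prod _ _ (g * q * m))) => [|z zs].
  exact: (submod_mulr q (submod_mulr m HT)).
have [-> | z0] := eqVneq z 0; first by rewrite !mul0r; case: HT.
exact: prod_inv_cons zs Hq (Hm z zs z0).
Qed.

Lemma w_basic_PvMD : PvMD R.
Proof.
move=> I HI [s Is] Inz; apply/t_invertibleP.
have gI : seteq I (gen s) by [].
have sR z : z \in s -> Rs z by case: HI => IR _ _ _ zs; apply/IR/gI/gen_mem.
have s_nz : has (fun z => z != 0) s.
  by apply: gen_nonzero; case: Inz => x [/gI Ix x0]; exists x.
apply: contains_GV_mono (gen_t_invertible sR s_nz).
by apply: prod_mono => [y /gI // | ]; apply: inv_anti => y /gI.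
Qed.

End WBasic.

End PvMD.

Theorem theorem2p1 (R : idomainType) :
  PvMD R <->
  (forall I : Kset R, is_ideal I -> fg I -> nonzero I -> w_basic I).
Proof. by split=> [/PvMD_w_basic | /w_basic_PvMD]. Qed.
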